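(* Let $n\in\mathbb{N}_{\geq 2}$, $k_n=\lceil\log_2 n\rceil$, and suppose $n\neq 3\cdot 2^{k_n-2}$. Then the GFB trees $T_{n-1}^{gfb},T_n^{gfb},T_{n+1}^{gfb}$ have a common maximal pending subtree which is fully balanced: (i) if $n\in(2^{k_n-1},3\cdot2^{k_n-2})$, this common subtree is the fully balanced tree of height $k_n-2$; (ii) if $n\in(3\cdot2^{k_n-2},2^{k_n}]$, it is the fully balanced tree of height $k_n-1$.
   Context: A rooted binary tree with $n\geq 2$ leaves is a rooted tree whose root has degree 2 and all other internal nodes have degree 3; for $n=1$ it is a single node. Trees are considered up to isomorphism. The maximal pending subtrees of a tree with at least 2 leaves are the two subtrees rooted at the children of the root. The fully balanced tree of height $k$ is the rooted binary tree with $2^k$ leaves all at depth $k$. The GFB tree $T_n^{gfb}$ is the output of: start with $n$ single-node trees; while more than one tree remains, remove a tree $u$ of minimal size (number of leaves), then remove a tree $v$ of minimal size among the remaining ones, and insert the tree with a new root whose children are the roots of $u$ and $v$; output the remaining tree. *)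

From Stdlib Require Import List Permutation.
From mathcomp Require Import all_boot.
Set Implicit Arguments. Unset Strict Implicit. Unset Printing Implicit Defensive.

(* Rooted binary trees (plane representation; isomorphism = swapping children). *)
Inductive tree : Type := Leaf | Node of tree & tree.

Fixpoint leaves (t : tree) : nat :=
  match t with Leaf => 1 | Node l r => leaves l + leaves r end.

Inductive tree_iso : tree -> tree -> Prop :=
| iso_leaf : tree_iso Leaf Leaf
| iso_node_straight a b c d :
    tree_iso a c -> tree_iso b d -> tree_iso (Node a b) (Node c d)
| iso_node_swap a b c d :
    tree_iso a d -> tree_iso b c -> tree_iso (Node a b) (Node c d).

Fixpoint fb (k : nat) : tree :=
  match k with 0 => Leaf | k'.+1 => Node (fb k') (fb k') end.

Definition max_pending (T S : tree) : Prop :=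
  exists l r, T = Node l r /\ (S = l \/ S = r).

(* One step of the GFB algorithm on a forest (a multiset, represented as a list
   up to permutation): remove a tree u of minimal size, then a tree v of minimal
   size among the remaining ones, insert the tree with children u and v. *)
Definition gfb_step (F F' : list tree) : Prop :=
  exists u v rest,
    Permutation F (u :: v :: rest) /\
    all (fun t => leaves u <= leaves t) (v :: rest) /\
    all (fun t => leaves v <= leaves t) rest /\
    F' = Node u v :: rest.

Inductive gfb_run : list tree -> list tree -> Prop :=
| gfb_refl F : gfb_run F F
| gfb_trans F G H : gfb_step F G -> gfb_run G H -> gfb_run F H.

(* T is a possible output of the GFB algorithm started on n single-node trees
   (ties may be broken arbitrarily). *)
Definition is_gfb (n : nat) (T : tree) : Prop := gfb_run (nseq n Leaf) [:: T].

From Stdlib Require Import List Permutation.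
From mathcomp Require Import all_boot zify.

(* Along any GFB run the forest keeps two properties: every tree is
   [pow2_balanced] (at each internal node the two children differ in size by
   at most a factor 2 and one of them has a power-of-2 size), and the sizes in
   the forest are pairwise within a factor 2 with at most one of them not a
   power of 2.  Merging the two smallest trees preserves both.  A
   pow2-balanced tree with 2^j leaves is fully balanced, so an output tree with
   m leaves has the fully balanced tree of height p as a maximal pending
   subtree as soon as 3 2^p <= 2 m <= 6 2^p; the hypotheses put n - 1, n and
   n + 1 in this window for p = k - 2, resp. p = k - 1. *)

Definition is_pow2 (x : nat) : bool := 2 ^ trunc_log 2 x == x.

Lemma is_pow2P x : reflect (exists j, x = 2 ^ j) (is_pow2 x).
Proof.
apply: (iffP eqP) => [<-|[j ->]]; first by exists (trunc_log 2 x).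
by rewrite trunc_expnK.
Qed.

Lemma pow2_sum_eq {a b i j} :
  a = 2 ^ i -> a <= 2 * b -> b <= 2 * a -> a + b = 2 ^ j -> b = a /\ j = i.+1.
Proof.
move=> ai ab ba sum; have := expn_gt0 2 i.
have : 2 ^ i < 2 ^ j by lia.
have : 2 ^ j < 2 ^ i.+2 by rewrite !expnS; lia.
rewrite !ltn_exp2l // => j_lt ij _.
have ji : j = i.+1 by lia.
by move: sum; rewrite ji expnS; lia.
Qed.

Lemma pow2_summand {a b i} p : a = 2 ^ i -> a <= 2 * b -> b <= 2 * a ->
  3 * 2 ^ p <= 2 * (a + b) <= 6 * 2 ^ p -> a = 2 ^ p \/ b = 2 ^ p.
Proof.
move=> ai ab ba /andP [lo hi].
have : 2 ^ p <= 2 ^ i.+1 by rewrite expnS; lia.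
have : 2 ^ i.+1 <= 2 ^ p.+2 by rewrite !expnS; lia.
rewrite !leq_exp2l // => ip pi.
have [e|[e|e]] : p = i.+1 \/ i = p \/ i = p.+1 by lia.
all: by subst; rewrite ?expnS in ab ba lo hi *; lia.
Qed.

Lemma leaves_gt0 t : 0 < leaves t.
Proof. by elim: t => //= l IHl r IHr; rewrite addn_gt0 IHl. Qed.

Lemma tree_iso_refl t : tree_iso t t.
Proof. by elim: t => [|l IHl r IHr]; constructor. Qed.

Fixpoint pow2_balanced (t : tree) : bool :=
  if t is Node u v then
    [&& pow2_balanced u, pow2_balanced v, leaves u <= 2 * leaves v,
        leaves v <= 2 * leaves u & is_pow2 (leaves u) || is_pow2 (leaves v)]
  else true.

Lemma pow2_balanced_fb t j :
  pow2_balanced t -> leaves t = 2 ^ j -> tree_iso t (fb j).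
Proof.
elim: t j => [|u IHu v IHv] j /=.
  by move=> _ /(@expnI 2 erefl 0) <-; constructor.
case/and5P => bu bv uv vu /orP [] /is_pow2P [i ei] sum.
- have [vi ->] := pow2_sum_eq ei uv vu sum.
  by constructor; [apply: IHu | apply: IHv]; rewrite ?vi.
- rewrite addnC in sum; have [ui ->] := pow2_sum_eq ei vu uv sum.
  by constructor; [apply: IHu | apply: IHv]; rewrite ?ui.
Qed.

Lemma pow2_balanced_pending_fb T p : pow2_balanced T ->
  3 * 2 ^ p <= 2 * leaves T <= 6 * 2 ^ p ->
  exists P, max_pending T P /\ tree_iso P (fb p).
Proof.
case: T => [|u v] /=; first by have := expn_gt0 2 p; lia.
case/and5P => bu bv uv vu pw bounds.
suff [e|e] : leaves u = 2 ^ p \/ leaves v = 2 ^ p.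
- by exists u; split; [exists u, v; auto | exact: pow2_balanced_fb].
- by exists v; split; [exists u, v; auto | exact: pow2_balanced_fb].
case/orP: pw => /is_pow2P [i ei]; first exact: pow2_summand _ ei uv vu bounds.
by rewrite addnC in bounds; case: (pow2_summand _ ei vu uv bounds); auto.
Qed.

Definition within_factor2 (a b : nat) : bool := (a <= 2 * b) && (b <= 2 * a).

Definition gfb_sizes (s : seq nat) : bool :=
  all2rel within_factor2 s && (count (predC is_pow2) s <= 1).

Lemma within_factor2_sym : symmetric within_factor2.
Proof. by move=> a b; rewrite /within_factor2 andbC. Qed.

Lemma gfb_sizes_perm {s1 s2} : perm_eq s1 s2 -> gfb_sizes s1 = gfb_sizes s2.
Proof.
move=> s12; have s12_mem := perm_mem s12.
by rewrite /gfb_sizes (eq_allrel_mem2 _ s12_mem s12_mem) (permP s12).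
Qed.

Lemma gfb_sizes_head {a b s} : gfb_sizes [:: a, b & s] ->
  [&& a <= 2 * b, b <= 2 * a & is_pow2 a || is_pow2 b].
Proof.
rewrite /gfb_sizes !(all2rel_cons within_factor2_sym).
case/andP=> /and5P [_ /andP [/andP [ab ba] _] _ _ _] /= count1.
by rewrite ab ba; move: count1; case: (is_pow2 a); case: (is_pow2 b).
Qed.

Lemma gfb_sizes_merge {a b s} : 0 < a -> a <= b -> all (leq b) s ->
  gfb_sizes [:: a, b & s] -> gfb_sizes (a + b :: s).
Proof.
rewrite /gfb_sizes !(all2rel_cons within_factor2_sym).
move=> a_gt0 ab /allP b_min.
case/andP=> /and5P [_ /andP [/andP [_ ba] /allP a_s] _ _ ss] count_ab.
apply/andP; split.
  rewrite ss andbT /within_factor2 leq_pmull ?addn_gt0 ?a_gt0 //=.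
  apply/allP => c cs; have := a_s c cs; have := b_min c cs.
  by rewrite /within_factor2; lia.
move: count_ab => /=.
case: (boolP (is_pow2 a)) => pa; case: (boolP (is_pow2 b)) => pb /= count_ab;
  last 3 first.
1-3: by case: (~~ _) => /=; lia.
move: pa pb => /is_pow2P [i ai] /is_pow2P [j bj].
have : 2 ^ i <= 2 ^ j by rewrite -ai -bj.
have : 2 ^ j <= 2 ^ i.+1 by rewrite expnS -ai -bj.
rewrite !leq_exp2l // => ji ij.
have [e|e] : j = i \/ j = i.+1 by lia.
- have -> // : is_pow2 (a + b).
  by apply/is_pow2P; exists i.+1; rewrite expnS ai bj e; lia.
(* b = 2 a: every other size lies between b and 2 a, hence equals b. *)
- suff -> : count (predC is_pow2) s = 0 by case: (~~ _).
  rewrite (eq_in_count (a2 := pred0)) ?count_pred0 // => c cs /=.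
  have -> : c = b.
    have := a_s c cs; have := b_min c cs.
    by rewrite /within_factor2 bj ai e expnS; lia.
  by apply/negbF/is_pow2P; exists j.
Qed.

Definition gfb_forest (F : seq tree) : bool :=
  all pow2_balanced F && gfb_sizes (map leaves F).

Lemma Permutation_perm_eq_map {T : Type} {U : eqType} (f : T -> U) {s1 s2} :
  Permutation s1 s2 -> perm_eq (map f s1) (map f s2).
Proof.
elim=> [|x ? ? _ IH|x y s|? ? ? _ IH1 _ IH2] /=.
- exact: perm_refl.
- by rewrite perm_cons.
- by rewrite (perm_catCA [:: f y] [:: f x]).
- exact: perm_trans IH1 IH2.
Qed.

Lemma gfb_forest_perm {F F'} : Permutation F F' ->
  gfb_forest F = gfb_forest F' /\ sumn (map leaves F) = sumn (map leaves F').
Proof.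
move=> FF'; have leavesF := Permutation_perm_eq_map leaves FF'.
have balF := Permutation_perm_eq_map pow2_balanced FF'.
rewrite /gfb_forest (gfb_sizes_perm leavesF) (perm_sumn leavesF).
by rewrite -!(all_map pow2_balanced id) (perm_all _ balF).
Qed.

Lemma gfb_forest_step {F G} : gfb_step F G -> gfb_forest F ->
  gfb_forest G /\ sumn (map leaves G) = sumn (map leaves F).
Proof.
case=> u [v [rest [FP [/andP [uv _] [v_min ->]]]]].
have [-> ->] := gfb_forest_perm FP.
case/andP => /= /and3P [bu bv brest] sizes; split; last by rewrite addnA.
have /and3P [u_2v v_2u pow_uv] := gfb_sizes_head sizes.
rewrite /gfb_forest /= bu bv u_2v v_2u pow_uv brest /=.
by apply: gfb_sizes_merge (leaves_gt0 u) uv _ sizes; rewrite all_map.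
Qed.

Lemma gfb_forest_run {F G} : gfb_run F G -> gfb_forest F ->
  gfb_forest G /\ sumn (map leaves G) = sumn (map leaves F).
Proof.
elim=> [//|F0 G0 H0 step _ IH] F0_ok.
have [G0_ok <-] := gfb_forest_step step F0_ok.
exact: IH.
Qed.

Lemma gfb_forest_leaves m : gfb_forest (nseq m Leaf).
Proof.
rewrite /gfb_forest all_nseq orbT map_nseq /gfb_sizes count_nseq /=.
by rewrite andbT; apply/allrelP => x y /nseqP [-> _] /nseqP [-> _].
Qed.

Lemma gfb_output m T : is_gfb m T -> pow2_balanced T /\ leaves T = m.
Proof.
move=> run.
have [/andP [/= /andP [bT _] _]] := gfb_forest_run run (gfb_forest_leaves m).
by rewrite map_nseq sumn_nseq /= addn0 mul1n.
Qed.

Lemma gfb_pending_fb m p T : is_gfb m T -> 3 * 2 ^ p <= 2 * m <= 6 * 2 ^ p ->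
  exists P, max_pending T P /\ tree_iso P (fb p).
Proof. by case/gfb_output => bT <-; apply: pow2_balanced_pending_fb. Qed.

Lemma gfb_consecutive_common_fb n p T1 T2 T3 :
  3 * 2 ^ p <= 2 * n.-1 -> 2 * n.+1 <= 6 * 2 ^ p ->
  is_gfb n.-1 T1 -> is_gfb n T2 -> is_gfb n.+1 T3 ->
  exists S, tree_iso S (fb p) /\
    (exists P1, max_pending T1 P1 /\ tree_iso P1 S) /\
    (exists P2, max_pending T2 P2 /\ tree_iso P2 S) /\
    (exists P3, max_pending T3 P3 /\ tree_iso P3 S).
Proof.
move=> lo hi T1_gfb T2_gfb T3_gfb.
exists (fb p); split; first exact: tree_iso_refl.
by do ![split]; apply: gfb_pending_fb; eauto; apply/andP; split; lia.
Qed.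

Theorem corollary1 (n : nat) (T1 T2 T3 : tree) :
  3 <= n ->
  let k := up_log 2 n in
  n <> 3 * 2 ^ (k - 2) ->
  is_gfb n.-1 T1 -> is_gfb n T2 -> is_gfb n.+1 T3 ->
  (2 ^ (k - 1) < n < 3 * 2 ^ (k - 2) ->
     exists S, tree_iso S (fb (k - 2)) /\
       (exists P1, max_pending T1 P1 /\ tree_iso P1 S) /\
       (exists P2, max_pending T2 P2 /\ tree_iso P2 S) /\
       (exists P3, max_pending T3 P3 /\ tree_iso P3 S)) /\
  (3 * 2 ^ (k - 2) < n <= 2 ^ k ->
     exists S, tree_iso S (fb (k - 1)) /\
       (exists P1, max_pending T1 P1 /\ tree_iso P1 S) /\
       (exists P2, max_pending T2 P2 /\ tree_iso P2 S) /\
       (exists P3, max_pending T3 P3 /\ tree_iso P3 S)).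
Proof.
move=> n_ge3 k _ T1_gfb T2_gfb T3_gfb; clearbody k.
case: k => [|[|k]]; rewrite ?subSS ?subn0 ?sub0n ?expn0 ?expn1.
1,2: by split=> /andP []; lia.
split=> /andP [lo hi]; apply: (gfb_consecutive_common_fb n) => //.
all: by rewrite ?expnS in lo hi *; lia.
Qed.
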